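(* Let $m\ge3$, $C$ a set of $m$ candidates, $T$ the set of all $m!$ strict rankings of $C$, $w=(w_1,\dots,w_m)$ with $1=w_1\ge\cdots\ge w_m=0$, $\bar w=(w_1+\cdots+w_m)/m$, and $\sigma_t(\alpha)=w_i$ where $i$ is the position of $\alpha$ in $t\in T$. Let $(N_t)_{t\in T}$ be nonnegative integers with $\sum_tN_t=n$ and $|\alpha|=\sum_tN_t\sigma_t(\alpha)$. Suppose $|a|>|\alpha|$ for all $\alpha\ne a$, and $b\ne a$ satisfies $|b|\ge|\alpha|$ for all $\alpha\ne a$. Let $T_b$ be the set of types ranking $b$ first, $T_i$ ($1\le i\le m-1$) the set of types ranking $b$ in position $i$ and $a$ in position $i+1$, and $T_{ba}=\bigcup_iT_i$. Then the linear program $$\min\sum_{t\in T_{ba}}x_t\ \text{ s.t. }\ \sum_{t\in T_b}y_t(1-\sigma_t(\alpha))-\sum_{t\in T_{ba}}x_t(\sigma_t(b)-\sigma_t(\alpha))\ge|\alpha|-|b|\ \forall\alpha\ne b,\quad \sum_{t\in T_b}y_t=\sum_{t\in T_{ba}}x_t,\quad x_t\ge0,\ y_t\ge0$$ has the same optimal value (with the value $+\infty$ for an infeasible program) as the linear program $$\min\sum_{i=1}^{m-1}z_i\ \text{ s.t. }\ \sum_{i=1}^{m-1}(1-w_i+w_{i+1})z_i\ge|a|-|b|,\quad \sum_{i=1}^{m-1}(1-w_i)z_i\ge n\bar w-|b|,\quad z_i\ge0\ (i=1,\dots,m-1).$$ *)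

From HB Require Import structures.
From mathcomp Require Import all_boot all_order all_algebra all_fingroup.
From mathcomp Require Import all_classical all_reals ereal.
Set Implicit Arguments. Unset Strict Implicit. Unset Printing Implicit Defensive.
Import Order.TTheory GRing.Theory Num.Theory.
Local Open Scope ring_scope.
Local Open Scope classical_set_scope.

(* Conventions:
   - candidates are 'I_m; a ranking (type) t : {perm 'I_m} sends candidate
     alpha to its 0-based position t alpha (paper position = t alpha + 1);
   - the weight vector is w : nat -> R, with w i the paper's w_{i+1};
     only the values w 0, ..., w (m-1) are ever used. *)

Section Voting.
Variables (R : realType) (m : nat).

Definition wvalid (w : nat -> R) : Prop :=
  [/\ w 0%N = 1, w m.-1 = 0 & forall i : nat, (i.+1 < m)%N -> w i.+1 <= w i].

Definition sigma (w : nat -> R) (t : {perm 'I_m}) (alpha : 'I_m) : R :=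
  w (t alpha : nat).

Definition score (w : nat -> R) (N : {perm 'I_m} -> nat) (alpha : 'I_m) : R :=
  \sum_(t : {perm 'I_m}) (N t)%:R * sigma w t alpha.

Definition inTb (b : 'I_m) (t : {perm 'I_m}) : bool := (t b == 0 :> nat).

Definition inTba (a b : 'I_m) (t : {perm 'I_m}) : bool :=
  (t a == (t b).+1 :> nat).

Definition LP1_feasible (w : nat -> R) (N : {perm 'I_m} -> nat) (a b : 'I_m)
    (x y : {perm 'I_m} -> R) : Prop :=
  [/\ forall alpha : 'I_m, alpha != b ->
        \sum_(t | inTb b t) y t * (1 - sigma w t alpha)
        - \sum_(t | inTba a b t) x t * (sigma w t b - sigma w t alpha)
        >= score w N alpha - score w N b,
      \sum_(t | inTb b t) y t = \sum_(t | inTba a b t) x t,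
      forall t, 0 <= x t
    & forall t, 0 <= y t].

(* optimal value (infimum, +oo if infeasible) of the first LP *)
Definition LP1_value (w : nat -> R) (N : {perm 'I_m} -> nat) (a b : 'I_m)
    : \bar R :=
  ereal_inf [set r%:E | r in
    [set r : R | exists x y, LP1_feasible w N a b x y /\
                             r = \sum_(t | inTba a b t) x t]].

Definition nat_total (N : {perm 'I_m} -> nat) : nat := \sum_(t : {perm 'I_m}) N t.

Definition wbar (w : nat -> R) : R := (\sum_(i < m) w i) / m%:R.

Definition LP2_feasible (w : nat -> R) (N : {perm 'I_m} -> nat) (a b : 'I_m)
    (z : 'I_m.-1 -> R) : Prop :=
  [/\ \sum_(i < m.-1) (1 - w i + w i.+1) * z i >= score w N a - score w N b,
      \sum_(i < m.-1) (1 - w i) * z i >= (nat_total N)%:R * wbar w - score w N b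
    & forall i, 0 <= z i].

Definition LP2_value (w : nat -> R) (N : {perm 'I_m} -> nat) (a b : 'I_m)
    : \bar R :=
  ereal_inf [set r%:E | r in
    [set r : R | exists z, LP2_feasible w N a b z /\ r = \sum_(i < m.-1) z i]].

End Voting.

From HB Require Import structures.
From mathcomp Require Import all_boot all_order all_algebra all_fingroup.
From mathcomp Require Import all_classical all_reals ereal.
From mathcomp Require Import ring lra zify.
Import Order.TTheory GRing.Theory Num.Theory.
Set Implicit Arguments. Unset Strict Implicit. Unset Printing Implicit Defensive.

(* LP2 <= LP1: grouping a feasible [x] of the first program by the position of
   [b], [z_i = sum_(t in T_i) x_t], gives a feasible [z] of the same cost. The
   constraint at [alpha = a] yields the first constraint of the second program,
   and the sum of all the constraints yields the second one, since every ranking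
   hands out the same total weight [w_1 + ... + w_m].

   LP1 <= LP2: if the first program had no solution of cost at most [sum_i z_i]
   for a feasible [z], Farkas' lemma (a consequence of Fourier-Motzkin
   elimination) would provide a dual certificate [(lambda, mu, kappa)]. Adding
   the dual constraints of a type [t] in [T_i] and a type [u] in [T_b] that
   agree on the candidates ranked below [b] by [t], and comparing [lambda] with
   its minimum [lambda_s] over [s <> b], gives
   [kappa >= (lambda_a - lambda_s) (1 - w_i + w_(i+1)) + lambda_s m (1 - w_i)]
   for every [i]. Weighting by [z_i] and using [|alpha| <= |b|] for [alpha <> a]
   contradicts the certificate. *)

Ltac case_if_lia :=
  repeat match goal with |- context [if ?c then _ else _] =>
    lazymatch c with context [if _ then _ else _] => fail | _ =>
      let E := fresh "E" in destruct c eqn:E end end; lia.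

Section Permutations.
Variable T : finType.

Lemma exists_perm2 (c1 c2 p1 p2 : T) : c1 != c2 -> p1 != p2 ->
  exists u : {perm T}, u c1 = p1 /\ u c2 = p2.
Proof.
move=> c12 p12; pose u1 := tperm c1 p1; have u1c1 : u1 c1 = p1 by rewrite tpermL.
exists (u1 * tperm (u1 c2) p2)%g; rewrite !permM tpermL u1c1; split=> //.
by rewrite tpermD ?(eq_sym p2) // -u1c1 (inj_eq perm_inj) eq_sym.
Qed.

Lemma exists_perm3 (c1 c2 c3 p1 p2 p3 : T) :
  [&& c1 != c2, c1 != c3 & c2 != c3] -> [&& p1 != p2, p1 != p3 & p2 != p3] ->
  exists u : {perm T}, [/\ u c1 = p1, u c2 = p2 & u c3 = p3].
Proof.
move=> /and3P[c12 c13 c23] /and3P[p12 p13 p23].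
have [u [uc1 uc2]] := exists_perm2 c12 p12.
exists (u * tperm (u c3) p3)%g; rewrite !permM tpermL; split=> //.
  by rewrite uc1 tpermD ?(eq_sym p3) // -uc1 (inj_eq perm_inj) eq_sym.
by rewrite uc2 tpermD ?(eq_sym p3) // -uc2 (inj_eq perm_inj) eq_sym.
Qed.

End Permutations.

Section Positions.
Variable n : nat.

Lemma tperm_val (x y z : 'I_n.+1) :
  tperm x y z = (if z == x :> nat then y : nat else if z == y :> nat then x : nat else z) :> nat.
Proof.
case: tpermP => [->|->|/eqP zx /eqP zy]; rewrite ?eqxx //.
  by case: eqP => // /val_inj ->.
by rewrite !val_eqE (negbTE zx) (negbTE zy).
Qed.

Definition demote_top_fun (i p : 'I_n.+1) : 'I_n.+1 :=
  inord (if p == 0 :> nat then i : nat else if p <= i then p.-1 else p).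

Lemma demote_top_funE i p :
  demote_top_fun i p = (if p == 0 :> nat then i : nat else if p <= i then p.-1 else p) :> nat.
Proof. by rewrite inordK //; have := ltn_ord p; have := ltn_ord i; case_if_lia. Qed.

Lemma demote_top_fun_inj i : injective (demote_top_fun i).
Proof.
move=> p q /(congr1 val); rewrite /= !demote_top_funE => epq; apply: ord_inj.
by move: epq; have := ltn_ord p; case_if_lia.
Qed.

(* Composed after a ranking, [demote_top i] moves its top candidate down to
   position [i] and the candidates at positions [1..i] up by one. *)
Definition demote_top i : {perm 'I_n.+1} := perm (@demote_top_fun_inj i).

Lemma demote_topE i p :
  demote_top i p = (if p == 0 :> nat then i : nat else if p <= i then p.-1 else p) :> nat.
Proof. by rewrite permE demote_top_funE. Qed.

Lemma perm_val_eq (u : {perm 'I_n.+1}) (p q : 'I_n.+1) : (u p == u q :> nat) = (p == q).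
Proof. by rewrite val_eqE (inj_eq perm_inj). Qed.

End Positions.

Local Open Scope ring_scope.

Section FourierMotzkin.
Variable R : realFieldType.

Lemma exists_between (I : finType) (P Q : pred I) (L U : I -> R) :
  (forall p q, P p -> Q q -> L p <= U q) ->
  exists x, (forall p, P p -> L p <= x) /\ (forall q, Q q -> x <= U q).
Proof.
move=> LU; case: (pickP P) => [p0 Pp0 | P0].
  exists (L [arg max_(p > p0 | P p) L p]%O).
  by case: arg_maxP => // p Pp maxp; split=> [p' /maxp|q /(LU _ _ Pp)].
exists (- \sum_q `|U q|); split=> [p|q _]; first by rewrite P0.
rewrite (bigD1 q) //= opprD.
have : 0 <= \sum_(j | j != q) `|U j| by apply: sumr_ge0.
have := ler_norm (- U q); rewrite normrN; lra.
Qed.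

Variables (I : finType) (a : I -> R).

(* Eliminating a variable with coefficient column [a]: the rows with [a i = 0]
   are kept, and each pair [(p, q)] with [a p > 0 > a q] is replaced by the
   positive combination [- a q * row p + a p * row q], where the variable
   cancels. *)
Definition fm_elim (g : I -> R) (k : I + I * I) : R :=
  match k with
  | inl i => (a i == 0)%:R * g i
  | inr pq => ((0 < a pq.1) && (a pq.2 < 0))%:R * (- a pq.2 * g pq.1 + a pq.1 * g pq.2)
  end.

Definition fm_dual (y : I + I * I -> R) (i : I) : R :=
  (a i == 0)%:R * y (inl i)
  + \sum_q ((0 < a i) && (a q < 0))%:R * y (inr (i, q)) * - a q
  + \sum_p ((0 < a p) && (a i < 0))%:R * y (inr (p, i)) * a p.

Lemma fm_elim_self k : fm_elim a k = 0.
Proof.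
case: k => [i|[p q]] /=; last by rewrite (mulrC (a p)) mulNr addNr mulr0.
by case: eqP => [->|_]; rewrite ?mulr0 ?mul0r.
Qed.

Lemma fm_elim_sum n (G : 'I_n -> I -> R) (x : 'I_n -> R) k :
  \sum_j fm_elim (G j) k * x j = fm_elim (fun i => \sum_j G j i * x j) k.
Proof.
case: k => [i|[p q]] /=; first by rewrite mulr_sumr; apply: eq_bigr => j _; ring.
by rewrite !mulr_sumr -big_split mulr_sumr; apply: eq_bigr => j _ /=; ring.
Qed.

Lemma fm_dualE y g : \sum_i fm_dual y i * g i = \sum_k y k * fm_elim g k.
Proof.
pose c p q := ((0 < a p) && (a q < 0))%:R * y (inr (p, q)).
have split_pair p q : y (inr (p, q)) * fm_elim g (inr (p, q)) =
    c p q * - a q * g p + c p q * a p * g q by rewrite /c /=; ring.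
pose Y p q := y (inr (p, q)) * fm_elim g (inr (p, q)).
rewrite big_sumType /= (eq_bigr (fun pq => Y pq.1 pq.2)); last by case.
rewrite -(pair_bigA _ Y) /= /Y.
under [X in _ = _ + X]eq_bigr do rewrite (eq_bigr _ (fun q _ => split_pair _ q)) big_split /=.
rewrite big_split /= addrA; under eq_bigr do rewrite !mulrDl.
rewrite !big_split /=; congr (_ + _ + _).
- by apply: eq_bigr => i _; ring.
- by apply: eq_bigr => p _; rewrite mulr_suml.
by rewrite [RHS]exchange_big /=; apply: eq_bigr => q _; rewrite mulr_suml.
Qed.

Lemma fm_dual_ge0 y : (forall k, 0 <= y k) -> forall i, 0 <= fm_dual y i.
Proof.
move=> y_ge0 i; rewrite /fm_dual !addr_ge0 ?mulr_ge0 ?ler0n //.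
  apply: sumr_ge0 => q _; have [aq_lt0|] := ltrP (a q) 0; last by rewrite andbF !mul0r.
  by rewrite mulr_ge0 ?mulr_ge0 ?ler0n // oppr_ge0 ltW.
apply: sumr_ge0 => p _; have [ap_gt0|] := ltrP 0 (a p); last by rewrite !mul0r.
by rewrite mulr_ge0 ?mulr_ge0 ?ler0n // ltW.
Qed.

Lemma fm_solve_elim (b s : I -> R) :
  (forall k, fm_elim b k <= fm_elim s k) -> exists xn, forall i, b i <= s i + a i * xn.
Proof.
move=> bs; pose d i := (b i - s i) / a i.
have [xn [d_le d_ge]] : exists xn,
    (forall p, 0 < a p -> d p <= xn) /\ (forall q, a q < 0 -> xn <= d q).
  apply: exists_between => p q ap_gt0 aq_lt0.
  have := bs (inr (p, q)); rewrite /= ap_gt0 aq_lt0 /= !mul1r => bsq.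
  rewrite /d ler_pdivrMr // mulrAC ler_ndivlMr //; lra.
exists xn => i; have [ai_lt0|ai_gt0|ai0] := ltrgtP (a i) 0.
- by have := d_ge i ai_lt0; rewrite /d ler_ndivlMr //; lra.
- by have := d_le i ai_gt0; rewrite /d ler_pdivrMr //; lra.
- by have := bs (inl i); rewrite /= ai0 eqxx !mul1r mul0r addr0.
Qed.

End FourierMotzkin.

Section Farkas.
Variable R : realFieldType.

Lemma farkas n (I : finType) (A : I -> 'I_n -> R) (b : I -> R) :
  (exists x : 'I_n -> R, forall i, b i <= \sum_j A i j * x j) \/
  (exists y : I -> R, [/\ forall i, 0 <= y i, forall j, \sum_i y i * A i j = 0
                        & 0 < \sum_i y i * b i]).
Proof.
elim: n I A b => [|n IH] I A b.
  case: (pickP (fun i => 0 < b i)) => [i bi_gt0|b_le0]; last first.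
    by left; exists (fun _ => 0) => i; rewrite big_ord0 leNgt b_le0.
  right; exists (fun i' => (i' == i)%:R); split=> [i'|[? //]|].
    by rewrite ler0n.
  by rewrite (bigD1 i) //= eqxx mul1r big1 ?addr0 // => i' /negbTE ->; rewrite mul0r.
pose a i := A i ord_max; pose A' i j := A i (widen_ord (leqnSn n) j).
have [[x' Ax'_ge]|[y' [y'_ge0 y'A' y'b]]] :=
  IH _ (fun k j => fm_elim a (A'^~ j) k) (fm_elim a b).
- left; pose s i := \sum_j A' i j * x' j.
  have [xn b_le] : exists xn, forall i, b i <= s i + a i * xn.
    by apply: fm_solve_elim => k; rewrite /s -fm_elim_sum.
  exists (fun j => if insub (val j) is Some j' then x' j' else xn) => i.
  rewrite big_ord_recr /= insubF ?ltnn //.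
  by under eq_bigr do rewrite valK.
- right; exists (fm_dual a y'); split; first exact: fm_dual_ge0.
    move=> j; rewrite fm_dualE; case: (unliftP ord_max j) => [j'|] ->; last first.
      by apply: big1 => k _; rewrite fm_elim_self mulr0.
    have -> : lift ord_max j' = widen_ord (leqnSn n) j' by apply: val_inj; exact: lift_max.
    exact: y'A'.
  by rewrite fm_dualE.
Qed.

Lemma farkas_nonneg (I J : finType) (A : I -> J -> R) (b : I -> R) :
  (exists x : J -> R, (forall j, 0 <= x j) /\ forall i, b i <= \sum_j A i j * x j) \/
  (exists y : I -> R, [/\ forall i, 0 <= y i, forall j, \sum_i y i * A i j <= 0
                        & 0 < \sum_i y i * b i]).
Proof.
pose A' (k : I + J) (l : 'I_#|J|) : R :=
  match k with inl i => A i (enum_val l) | inr j => (enum_val l == j)%:R end.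
pose b' (k : I + J) : R := if k is inl i then b i else 0.
have sum_enum (F : J -> R) : \sum_j F j = \sum_(l < #|J|) F (enum_val l).
  by rewrite (reindex _ (onW_bij _ (@enum_val_bij J))).
have [[x' Ax'_ge]|[y' [y'_ge0 y'A' y'b]]] := farkas A' b'.
- left; exists (x' \o enum_rank); split=> [j|i].
    have := Ax'_ge (inr j); rewrite (bigD1 (enum_rank j)) //= enum_rankK eqxx mul1r.
    rewrite big1 ?addr0 // => l; rewrite -(inj_eq enum_val_inj) enum_rankK => /negbTE ->.
    by rewrite mul0r.
  have := Ax'_ge (inl i); rewrite sum_enum.
  by under [in X in _ -> X]eq_bigr do rewrite /= enum_valK.
- right; exists (y' \o inl); split=> [i|j|]; first exact: y'_ge0.
    have := y'A' (enum_rank j); rewrite big_sumType /= enum_rankK.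
    have -> : \sum_j' y' (inr j') * (j == j')%:R = y' (inr j).
      rewrite (bigD1 j) //= eqxx mulr1 big1 ?addr0 // => j' /negbTE.
      by rewrite eq_sym => ->; rewrite mulr0.
    by have := y'_ge0 (inr j); lra.
  by move: y'b; rewrite big_sumType /= [X in _ + X]big1 ?addr0 // => j _; rewrite mulr0.
Qed.

End Farkas.

Section Corollary10.
Variables (R : realType) (n : nat) (w : nat -> R) (N : {perm 'I_n.+1} -> nat).
Variables (a b : 'I_n.+1).
Hypothesis w_valid : wvalid n.+1 w.
Hypothesis b_neq_a : b != a.
Hypothesis b_second : forall alpha, alpha != a -> score w N alpha <= score w N b.
Implicit Types (t u : {perm 'I_n.+1}) (alpha s : 'I_n.+1).

Lemma w_first : w 0 = 1. Proof. by case: w_valid. Qed.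

Lemma w_last : w n = 0. Proof. by case: w_valid. Qed.

Lemma w_nonincr i j : (i <= j)%N -> (j <= n)%N -> w j <= w i.
Proof.
case: w_valid => _ _ w_step ij jn.
have conv : {in gtn n.+1 &, forall i j k, (i < k < j)%N -> k \in gtn n.+1}.
  by move=> i' j' _ ltjm k /andP[_ ltkj]; apply: ltn_trans ltjm.
apply: (Order.NatMonotonyTheory.nonincn_inP conv) => //; rewrite ?inE ?ltnS //.
- by move=> k _ ltkm; apply: w_step.
- exact: leq_trans jn.
Qed.

Lemma w_ge0 (p : 'I_n.+1) : 0 <= w p.
Proof. by rewrite -w_last; apply: w_nonincr; rewrite -1?ltnS. Qed.

Lemma w_le1 (p : 'I_n.+1) : w p <= 1.
Proof. by rewrite -w_first; apply: w_nonincr; rewrite -1?ltnS. Qed.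

Definition wsum := \sum_(i < n.+1) w i.

Lemma sum_sigma t : \sum_alpha sigma w t alpha = wsum.
Proof. by rewrite /wsum [RHS](reindex_inj (@perm_inj _ t)). Qed.

Lemma sum_score : \sum_alpha score w N alpha = (nat_total N)%:R * wsum.
Proof.
rewrite /score exchange_big /= /nat_total natr_sum mulr_suml.
by apply: eq_bigr => t _; rewrite -mulr_sumr sum_sigma.
Qed.

Definition lp1_lhs (x y : {perm 'I_n.+1} -> R) (alpha : 'I_n.+1) : R :=
  \sum_(t | inTb b t) y t * (1 - sigma w t alpha)
  - \sum_(t | inTba a b t) x t * (sigma w t b - sigma w t alpha).

Lemma lp1_lhs_b x y : lp1_lhs x y b = 0.
Proof.
rewrite /lp1_lhs big1 ?sub0r => [|t /eqP tb0]; last by rewrite /sigma tb0 w_first subrr mulr0.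
by rewrite big1 ?oppr0 // => t _; rewrite subrr mulr0.
Qed.

Lemma sum_lp1_lhs x y : \sum_alpha lp1_lhs x y alpha =
  \sum_(t | inTb b t) y t * (n.+1%:R - wsum)
  - \sum_(t | inTba a b t) x t * (n.+1%:R * w (t b) - wsum).
Proof.
rewrite sumrB exchange_big [X in _ - X]exchange_big /=.
congr (_ - _); apply: eq_bigr => t _.
  by rewrite -mulr_sumr sumrB sumr_const card_ord sum_sigma.
by rewrite -mulr_sumr sumrB sumr_const card_ord sum_sigma mulr_natl.
Qed.

Definition z_of (x : {perm 'I_n.+1} -> R) (i : 'I_n) : R :=
  \sum_(t | inTba a b t && (t b == i :> nat)) x t.

Lemma inTba_lt t : inTba a b t -> (t b < n)%N.
Proof. by move/eqP=> tab; rewrite -ltnS -tab. Qed.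

Lemma sum_z_of (F : nat -> R) x :
  \sum_(i < n) F i * z_of x i = \sum_(t | inTba a b t) F (t b) * x t.
Proof.
under eq_bigr do rewrite mulr_sumr big_mkcond /=.
rewrite exchange_big /= [RHS]big_mkcond /=; apply: eq_bigr => t _.
case: ifP => [tab|_]; last by rewrite big1.
rewrite (bigD1 (Ordinal (inTba_lt tab))) //= eqxx big1 ?addr0 // => i neq_i.
by case: eqP => // tbi; case/eqP: neq_i; apply: val_inj.
Qed.

Lemma sum_z_of_cost x : \sum_(i < n) z_of x i = \sum_(t | inTba a b t) x t.
Proof.
have := sum_z_of (fun=> 1) x.
by under eq_bigr do rewrite mul1r; under [in RHS]eq_bigr do rewrite mul1r.
Qed.

Section Aggregation.
Variables x y : {perm 'I_n.+1} -> R.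
Hypothesis xy_feasible : LP1_feasible w N a b x y.

Lemma z_of_first_constraint :
  score w N a - score w N b <= \sum_(i < n) (1 - w i + w i.+1) * z_of x i.
Proof.
case: xy_feasible => lhs_ge sum_yx _ y_ge0.
rewrite (sum_z_of (fun i => 1 - w i + w i.+1)).
apply: le_trans (lhs_ge a _) _; first by rewrite eq_sym.
have -> : \sum_(t | inTba a b t) (1 - w (t b) + w (t b).+1) * x t =
    \sum_(t | inTb b t) y t - \sum_(t | inTba a b t) x t * (sigma w t b - sigma w t a).
  by rewrite sum_yx -sumrB; apply: eq_bigr => t /eqP tab; rewrite /sigma tab; ring.
rewrite lerD2r; apply: ler_sum => t _.
by rewrite -[leRHS]mulr1 ler_wpM2l // gerBl w_ge0.
Qed.

Lemma z_of_second_constraint :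
  (nat_total N)%:R * wbar n.+1 w - score w N b <= \sum_(i < n) (1 - w i) * z_of x i.
Proof.
case: xy_feasible => lhs_ge sum_yx _ _.
have sum_ge : \sum_alpha (score w N alpha - score w N b) <= \sum_alpha lp1_lhs x y alpha.
  apply: ler_sum => alpha _; have [->|neq_b] := eqVneq alpha b; last exact: lhs_ge.
  by rewrite lp1_lhs_b subrr.
rewrite sum_lp1_lhs sumrB sum_score sumr_const card_ord in sum_ge.
rewrite -mulr_suml sum_yx mulr_suml -sumrB in sum_ge.
have m_gt0 : 0 < n.+1%:R :> R by rewrite ltr0n.
rewrite (sum_z_of (fun i => 1 - w i)) -(ler_pM2l m_gt0).
have -> : n.+1%:R * ((nat_total N)%:R * wbar n.+1 w - score w N b) =
    (nat_total N)%:R * wsum - score w N b *+ n.+1.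
  by rewrite /wbar -/wsum -mulr_natl; field; rewrite gt_eqF.
apply: (le_trans sum_ge); rewrite mulr_sumr le_eqVlt; apply/predU1P; left.
by apply: eq_bigr => t _; ring.
Qed.

Lemma z_of_feasible : LP2_feasible w N a b (z_of x).
Proof.
split; [exact: z_of_first_constraint | exact: z_of_second_constraint |].
by case: xy_feasible => _ _ x_ge0 _ i; apply: sumr_ge0.
Qed.

End Aggregation.

Lemma LP2_le_LP1 : (LP2_value w N a b <= LP1_value w N a b)%E.
Proof.
apply: le_ereal_inf_tmp => _ [_ [x [y [xy_feasible ->]]] <-].
apply: ereal_inf_lbound; exists (\sum_(i < n) z_of x i); last by rewrite sum_z_of_cost.
by exists (z_of x); split=> //; apply: z_of_feasible xy_feasible.
Qed.

Lemma exists_demoted_type (u : {perm 'I_n.+1}) (i : 'I_n) : inTb b u -> (i < u a)%N ->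
  exists2 t, inTba a b t & t b = i :> nat /\
    forall alpha, alpha != a -> alpha != b -> u alpha != i.+1 :> nat ->
      (t alpha < i)%N \/ t alpha = u alpha :> nat.
Proof.
move=> /eqP ub0 i_lt_ua; pose i' := widen_ord (leqnSn n) i.
pose t := (u * demote_top i' * tperm (lift ord0 i) (u a))%g.
have tE alpha : t alpha = (let q := demote_top i' (u alpha) in
    if q == i.+1 :> nat then u a : nat else if q == u a :> nat then i.+1 else q) :> nat.
  by rewrite !permM tperm_val /= /bump leq0n add1n.
have tb : t b = i :> nat by rewrite tE /= demote_topE ub0 /=; case_if_lia.
have tab : inTba a b t.
  by rewrite /inTba tb tE /= demote_topE /=; case_if_lia.
exists t => //; split=> // alpha neq_a neq_b neq_i1; rewrite tE /= demote_topE /=.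
have := perm_val_eq u alpha a; have := perm_val_eq u alpha b.
rewrite ub0 (negbTE neq_a) (negbTE neq_b).
by move: neq_i1; case_if_lia.
Qed.

Lemma exists_Tba_Tb_pair (s : 'I_n.+1) (i : 'I_n) : s != b ->
  exists t u, [/\ inTba a b t, inTb b u, t b = i :> nat, s != a -> u a = n :> nat &
    forall alpha, alpha != a -> alpha != b -> alpha != s ->
      (t alpha < i)%N \/ t alpha = u alpha :> nat].
Proof.
move=> neq_sb; have i1E : lift ord0 i = i.+1 :> nat by [].
have [u [ub0 ua_gt ua_last u_free]] : exists u : {perm 'I_n.+1},
    [/\ u b = ord0, (i < u a)%N, s != a -> u a = n :> nat &
      forall alpha, alpha != a -> alpha != s -> u alpha != i.+1 :> nat].
  have [special|/norP[neq_sa neq_i1n]] := boolP ((s == a) || (i.+1 == n)).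
    have [u [ub0 uai]] := exists_perm2 b_neq_a (neq_lift ord0 i).
    exists u; split=> // [|neq_sa|alpha neq_a _]; rewrite ?uai //.
      by case/orP: special => /eqP; [move/eqP: neq_sa|].
    by rewrite -i1E -uai perm_val_eq.
  have distinct_c : [&& b != a, b != s & a != s].
    by rewrite b_neq_a !(eq_sym _ s) neq_sb neq_sa.
  have distinct_p : [&& (ord0 : 'I_n.+1) != ord_max, ord0 != lift ord0 i
                      & ord_max != lift ord0 i :> 'I_n.+1].
    by rewrite -!val_eqE /= /bump /=; have := ltn_ord i; lia.
  have [u [ub0 uan uai]] := exists_perm3 distinct_c distinct_p.
  exists u; split=> //; rewrite ?uan // => alpha _ neq_s.
  by rewrite -i1E -uai perm_val_eq.
have ub : inTb b u by rewrite /inTb ub0.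
have [t tab [tb t_below]] := exists_demoted_type ub ua_gt.
exists t, u; split=> // alpha neq_a neq_b neq_s.
by apply: t_below => //; apply: u_free.
Qed.

Section DualCertificate.
Variables (lam : 'I_n.+1 -> R) (mu kap : R).
Hypothesis lam_ge0 : forall alpha, 0 <= lam alpha.
Hypothesis dual_Tba : forall t, inTba a b t ->
  \sum_alpha lam alpha * (w (t alpha) - w (t b)) - mu <= kap.
Hypothesis dual_Tb : forall u, inTb b u ->
  \sum_alpha lam alpha * (1 - w (u alpha)) + mu <= 0.

Definition pair_coef (t u : {perm 'I_n.+1}) alpha : R :=
  1 - w (u alpha) + (w (t alpha) - w (t b)).

Lemma pair_coef_ge0 t u alpha : (t alpha < t b)%N \/ t alpha = u alpha :> nat ->
  0 <= pair_coef t u alpha.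
Proof.
rewrite /pair_coef => -[t_above|tu].
  have : w (t b) <= w (t alpha) by apply: w_nonincr; [exact: ltnW | rewrite -ltnS].
  by have := w_le1 (u alpha); lra.
by rewrite -tu; have := w_le1 (t b); lra.
Qed.

Lemma pair_coef_b t u : inTb b u -> pair_coef t u b = 0.
Proof. by move/eqP=> ub0; rewrite /pair_coef ub0 w_first; ring. Qed.

Lemma sum_pair_coef t u : \sum_alpha pair_coef t u alpha = n.+1%:R * (1 - w (t b)).
Proof. by rewrite !big_split /= !sumrN !sumr_const !card_ord !sum_sigma -mulr_natl; ring. Qed.

Lemma dual_pair t u : inTba a b t -> inTb b u ->
  \sum_alpha lam alpha * pair_coef t u alpha <= kap.
Proof.
move=> tab ub; have := dual_Tba tab; have := dual_Tb ub.
rewrite /pair_coef; under [in X in _ -> _ -> X]eq_bigr do rewrite mulrDr.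
rewrite big_split /=; lra.
Qed.

Lemma kap_lower_bound s : s != b -> (forall alpha, alpha != b -> lam s <= lam alpha) ->
  forall i : 'I_n, (lam a - lam s) * (1 - w i + w i.+1) + lam s * (n.+1%:R * (1 - w i)) <= kap.
Proof.
move=> neq_sb s_min i.
have [t [u [tab ub tb ua_last t_below]]] := exists_Tba_Tb_pair i neq_sb.
have coef_a : (lam a - lam s) * (1 - w i + w i.+1) = (lam a - lam s) * pair_coef t u a.
  have [->|neq_sa] := eqVneq s a; first by rewrite !subrr !mul0r.
  by move/eqP: tab; rewrite /pair_coef ua_last // w_last => ->; rewrite tb; congr (_ * _); ring.
have rest_ge0 : 0 <= \sum_(alpha | alpha != a) (lam alpha - lam s) * pair_coef t u alpha.
  apply: sumr_ge0 => alpha neq_a; have [->|neq_b] := eqVneq alpha b.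
    by rewrite pair_coef_b // mulr0.
  have [->|neq_s] := eqVneq alpha s; first by rewrite subrr mul0r.
  by rewrite mulr_ge0 ?subr_ge0 ?s_min // pair_coef_ge0 // tb; apply: t_below.
apply: le_trans (dual_pair tab ub).
have -> : \sum_alpha lam alpha * pair_coef t u alpha =
    lam s * \sum_alpha pair_coef t u alpha + \sum_alpha (lam alpha - lam s) * pair_coef t u alpha.
  by rewrite mulr_sumr -big_split; apply: eq_bigr => alpha _ /=; ring.
rewrite sum_pair_coef tb (bigD1 a) //= coef_a; lra.
Qed.

Lemma certificate_bound (z : 'I_n -> R) : LP2_feasible w N a b z ->
  \sum_alpha lam alpha * (score w N alpha - score w N b) <= kap * \sum_(i < n) z i.
Proof.
move=> [first_ge second_ge z_ge0].
pose r alpha := score w N alpha - score w N b; rewrite -/(r a) in first_ge.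
change (\sum_alpha lam alpha * r alpha <= kap * \sum_(i < n) z i).
have [s neq_sb s_min] : exists2 s, s != b & forall alpha, alpha != b -> lam s <= lam alpha.
  by case: (arg_minP lam (_ : a \in [pred s | s != b])) => [|s]; [rewrite inE eq_sym | exists s].
have lam_as : 0 <= lam a - lam s by rewrite subr_ge0 s_min // eq_sym.
have sum_r : \sum_alpha r alpha = (nat_total N)%:R * wsum - n.+1%:R * score w N b.
  by rewrite /r sumrB sum_score sumr_const card_ord -[_ *+ n.+1]mulr_natl.
have split_a :
    \sum_alpha lam alpha * r alpha <= (lam a - lam s) * r a + lam s * \sum_alpha r alpha.
  have -> : \sum_alpha lam alpha * r alpha =
      lam s * \sum_alpha r alpha + \sum_alpha (lam alpha - lam s) * r alpha.
    by rewrite mulr_sumr -big_split; apply: eq_bigr => alpha _ /=; ring.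
  have rest_le0 : \sum_(alpha | alpha != a) (lam alpha - lam s) * r alpha <= 0.
    apply: sumr_le0 => alpha neq_a; have [->|neq_b] := eqVneq alpha b.
      by rewrite /r subrr mulr0.
    by rewrite mulr_ge0_le0 ?subr_ge0 ?s_min // /r subr_le0 b_second.
  rewrite [\sum_alpha (lam alpha - lam s) * r alpha](bigD1 a) //=; lra.
set cz := \sum_(i < n) (1 - w i + w i.+1) * z i in first_ge.
set ez := \sum_(i < n) (1 - w i) * z i in second_ge.
have sum_r_le : \sum_alpha r alpha <= n.+1%:R * ez.
  have m_gt0 : 0 < n.+1%:R :> R by rewrite ltr0n.
  have := ler_wpM2l (ltW m_gt0) second_ge.
  by rewrite sum_r /wbar -/wsum mulrBr mulrCA [_ * (wsum / _)]mulrCA mulfV ?gt_eqF // mulr1.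
have bound_z : (lam a - lam s) * cz + lam s * (n.+1%:R * ez) <= kap * \sum_(i < n) z i.
  have -> : (lam a - lam s) * cz + lam s * (n.+1%:R * ez) = \sum_(i < n) z i *
      ((lam a - lam s) * (1 - w i + w i.+1) + lam s * (n.+1%:R * (1 - w i))).
    by rewrite /cz /ez !mulr_sumr -big_split; apply: eq_bigr => i _ /=; ring.
  rewrite mulr_sumr; apply: ler_sum => i _; rewrite [kap * _]mulrC ler_wpM2l //.
  exact: kap_lower_bound.
have := ler_wpM2l lam_as first_ge; have := ler_wpM2l (lam_ge0 s) sum_r_le; lra.
Qed.

End DualCertificate.

(* Rows of the first LP in the form [A X >= rhs] with [X = (x, y) >= 0]: the
   constraints indexed by candidates, the equation [sum y = sum x] as two
   inequalities, and the cost bound [- sum x >= - Z]. *)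
Definition lp1_row := ('I_n.+1 + (bool + unit))%type.

Definition lp1_xcoef (k : lp1_row) t : R :=
  match k with
  | inl alpha => sigma w t alpha - sigma w t b
  | inr (inl c) => - (-1) ^+ c
  | inr (inr _) => -1
  end.

Definition lp1_ycoef (k : lp1_row) t : R :=
  match k with
  | inl alpha => 1 - sigma w t alpha
  | inr (inl c) => (-1) ^+ c
  | inr (inr _) => 0
  end.

Definition lp1_mx (k : lp1_row) (j : {perm 'I_n.+1} + {perm 'I_n.+1}) : R :=
  match j with
  | inl t => (inTba a b t)%:R * lp1_xcoef k t
  | inr t => (inTb b t)%:R * lp1_ycoef k t
  end.

Definition lp1_rhs (Z : R) (k : lp1_row) : R :=
  match k with
  | inl alpha => score w N alpha - score w N b
  | inr (inl _) => 0
  | inr (inr _) => - Z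
  end.

Lemma lp1_mx_mulE X k : \sum_j lp1_mx k j * X j =
  \sum_(t | inTba a b t) lp1_xcoef k t * X (inl t) + \sum_(t | inTb b t) lp1_ycoef k t * X (inr t).
Proof.
rewrite big_sumType /=; congr (_ + _); rewrite [RHS]big_mkcond; apply: eq_bigr => t _ /=.
  by case: (inTba a b t); rewrite ?mul1r ?mul0r.
by case: (inTb b t); rewrite ?mul1r ?mul0r.
Qed.

Lemma lp1_feasible_of_mx Z X : (forall j, 0 <= X j) ->
  (forall k, lp1_rhs Z k <= \sum_j lp1_mx k j * X j) ->
  LP1_feasible w N a b (X \o inl) (X \o inr) /\ \sum_(t | inTba a b t) X (inl t) <= Z.
Proof.
move=> X_ge0 X_sol.
have row k : lp1_rhs Z k <= \sum_(t | inTba a b t) lp1_xcoef k t * X (inl t)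
                          + \sum_(t | inTb b t) lp1_ycoef k t * X (inr t).
  by rewrite -lp1_mx_mulE.
have sumsE (P : pred {perm 'I_n.+1}) (F : {perm 'I_n.+1} -> R) c :
    \sum_(t | P t) c * F t = c * \sum_(t | P t) F t by rewrite mulr_sumr.
have := row (inr (inl false)); have := row (inr (inl true)); have := row (inr (inr tt)).
rewrite /= !sumsE expr1 expr0 opprK mul0r addr0 => cost up down.
split; [split=> [alpha neq_b||t|t]; rewrite ?X_ge0 // | lra].
  apply: le_trans (row (inl alpha)) _; rewrite /= addrC -sumrN le_eqVlt; apply/predU1P; left.
  by congr (_ + _); apply: eq_bigr => t _; ring.
by rewrite /=; lra.
Qed.

Lemma sum_lp1_row (F : lp1_row -> R) : \sum_k F k =
  \sum_alpha F (inl alpha) + F (inr (inl true)) + F (inr (inl false)) + F (inr (inr tt)).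
Proof. by rewrite !big_sumType big_bool (big_pred1 tt) /= ?addrA // => -[]. Qed.

Lemma LP1_le_LP2_feasible z : LP2_feasible w N a b z ->
  (LP1_value w N a b <= (\sum_(i < n) z i)%:E)%E.
Proof.
move=> z_feasible.
have [[X [X_ge0 X_sol]]|[Y [Y_ge0 Y_col Y_rhs]]] :=
  farkas_nonneg lp1_mx (lp1_rhs (\sum_(i < n) z i)).
  have [X_feasible X_cost] := lp1_feasible_of_mx X_ge0 X_sol.
  apply: (@le_trans _ _ (\sum_(t | inTba a b t) X (inl t))%:E); last by rewrite lee_fin.
  apply: ereal_inf_lbound; exists (\sum_(t | inTba a b t) X (inl t)) => //.
  by exists (X \o inl), (X \o inr).
pose kap := Y (inr (inr tt)); pose mu := Y (inr (inl false)) - Y (inr (inl true)).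
have dual_Tba t : inTba a b t ->
    \sum_alpha Y (inl alpha) * (w (t alpha) - w (t b)) - mu <= kap.
  move=> tab; have := Y_col (inl t); rewrite sum_lp1_row /= tab expr1 expr0 opprK.
  by under eq_bigr do rewrite mul1r; rewrite !mul1r /sigma /mu /kap; lra.
have dual_Tb u : inTb b u -> \sum_alpha Y (inl alpha) * (1 - w (u alpha)) + mu <= 0.
  move=> ub; have := Y_col (inr u); rewrite sum_lp1_row /= ub expr1 expr0.
  by under eq_bigr do rewrite mul1r; rewrite !mul1r /sigma /mu; lra.
exfalso; have := certificate_bound (fun alpha => Y_ge0 (inl alpha)) dual_Tba dual_Tb z_feasible.
move: Y_rhs; rewrite sum_lp1_row /= !mulr0 !addr0 /kap; lra.
Qed.

Lemma LP1_le_LP2 : (LP1_value w N a b <= LP2_value w N a b)%E.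
Proof.
apply: le_ereal_inf_tmp => _ [_ [z [z_feasible ->]] <-].
exact: LP1_le_LP2_feasible.
Qed.

End Corollary10.

Unset Implicit Arguments.

Theorem corollary10 (R : realType) (m : nat) (w : nat -> R)
    (N : {perm 'I_m} -> nat) (a b : 'I_m) :
  (3 <= m)%N ->
  wvalid m w ->
  (forall alpha : 'I_m, alpha != a -> score w N alpha < score w N a) ->
  b != a ->
  (forall alpha : 'I_m, alpha != a -> score w N alpha <= score w N b) ->
  LP1_value w N a b = LP2_value w N a b.
Proof.
case: m N a b => [|n] N a b // _ w_valid _ b_neq_a b_second.
apply/le_anti/andP; split; first exact: LP1_le_LP2.
exact: LP2_le_LP1.
Qed.
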